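(* Let $\mathcal O$ be a cyclic operad, $n\ge1$, and let $S_0\in\mathcal S[2]$ be the $\mathcal O$-spider represented by the unit $1_{\mathcal O}\in\mathcal O[1]$. The subspace $\mathfrak a\mathcal O_n^0$ of $\mathfrak a\mathcal O_n$ spanned by the symplecto-spiders $[S_0\otimes v\otimes w]$, $v,w\in V_n$, is a Lie subalgebra of $\mathfrak a\mathcal O_n$ isomorphic to the symplectic Lie algebra $\mathfrak{sp}(2n)$.
   Context: Work over $\mathbb R$. A cyclic operad $\mathcal O$ consists of real vector spaces $\mathcal O[m]$ ($m\ge1$), a unit $1_{\mathcal O}\in\mathcal O[1]$, composition maps $\gamma:\mathcal O[m]\otimes\mathcal O[i_1]\otimes\cdots\otimes\mathcal O[i_m]\to\mathcal O[i_1+\cdots+i_m]$, and actions of $\Sigma_{m+1}$ on $\mathcal O[m]$ (permuting the output slot $0$ and the input slots $1,\dots,m$), satisfying the usual cyclic operad axioms (Getzler–Kapranov). For $m\ge2$ let $*_m$ be the star with one internal vertex and $m$ legs; a labeling is a bijection $L$ from the legs to $\{0,\dots,m-1\}$. The space of $\mathcal O$-spiders with $m$ legs is the coinvariant space $\mathcal S[m]=(\bigoplus_L\mathcal O[m-1])_{\Sigma_m}$, with $\sigma\cdot(o)_L=(\sigma\cdot o)_{\sigma\cdot L}$; each element is a class $[o_L]$. Given spiders $S,T$ and legs $\lambda$ of $S$, $\mu$ of $T$, the mating $(S,\lambda)\circ(\mu,T)$ is obtained by choosing representatives $(o_1)_{L_1}$ of $S$, $(o_2)_{L_2}$ of $T$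 with $L_1(\lambda)=0$, $L_2(\mu)=1$, and taking the class of $\gamma(o_2\otimes o_1\otimes 1_{\mathcal O}\otimes\cdots\otimes 1_{\mathcal O})$ with legs the remaining legs of $S$ and $T$ (the legs of $S$ inserted in order at the position of $\mu$). Let $V_n=\mathbb R^{2n}$ with basis $p_1,\dots,p_n,q_1,\dots,q_n$ and standard symplectic form $\omega$ ($\omega(p_i,q_j)=\delta_{ij}=-\omega(q_j,p_i)$, $\omega(p_i,p_j)=\omega(q_i,q_j)=0$). Define $\mathfrak a\mathcal O_n=\bigoplus_{m\ge2}(\mathcal S[m]\otimes V_n^{\otimes m})_{\Sigma_m}$ ($\Sigma_m$ acting diagonally); elements $[S\otimes v_1\otimes\cdots\otimes v_m]$ are symplecto-spiders (vector $v_i$ on the $i$-th leg). The bracket of symplecto-spiders $\mathbf s_1,\mathbf s_2$ is $[\mathbf s_1,\mathbf s_2]=\sum_{\lambda\in\mathbf s_1,\mu\in\mathbf s_2}\omega(v_\lambda,w_\mu)\,\cdot$(the symplecto-spider obtained by mating the underlying spiders along $\lambda,\mu$, deleting $v_\lambda,w_\mu$ and keeping the vectors on the remaining legs), extended bilinearly; this is a Lie bracket. *)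

From HB Require Import structures.
From mathcomp Require Import all_boot all_order fingroup perm all_algebra.
From mathcomp Require Import reals.

Set Implicit Arguments.
Unset Strict Implicit.
Unset Printing Implicit Defensive.

Import Order.TTheory GRing.Theory Num.Theory.
Local Open Scope ring_scope.

(* Indexing convention: [op k] is the space O[k+1]; its elements have slots *)
(* 0 (output), 1, ..., k+1 (inputs).  [opact k s] is the action of          *)
(* Sigma_{k+2} on O[k+1]; an element s.x has at slot s(j) what x had at     *)
(* slot j.  [opcomp i x y] (i : 'I_k.+1) is the partial composition         *)
(* x o_{i+1} y : slot i+1 of x glued to the output slot 0 of y.             *)

Record opData (R : nzRingType) := OpData {
  op : nat -> lmodType R;
  op1 : op 0;
  opact : forall k, {perm 'I_k.+2} -> op k -> op k;
  opcomp : forall k l, 'I_k.+1 -> op k -> op l -> op (k + l)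
}.

Arguments op1 {R} _.
Arguments opact {R} _ {k}.
Arguments opcomp {R} _ {k l}.

Definition castO (R : nzRingType) (O : opData R) (m p : nat) (e : m = p)
  (x : op O m) : op O p :=
  match e in _ = q return op O q with erefl => x end.

(* Origin of slot r of x o_{i+1} y, where y has arity l+1:                  *)
(* (false, s) = slot s of x ; (true, s) = slot s of y.                      *)
Definition orig (l i r : nat) : bool * nat :=
  if (r <= i)%N then (false, r)
  else if (r <= i + l.+1)%N then (true, (r - i)%N) else (false, (r - l)%N).

(* relabelling of origins under (s acting on x, t acting on y) *)
Definition relab k l (s : {perm 'I_k.+2}) (t : {perm 'I_l.+2})
  (p : bool * nat) : bool * nat :=
  if p.1 then (true, val (t (inord p.2))) else (false, val (s (inord p.2))).

(* same, when the roles of the two arguments are swapped in the composite *)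
Definition relabsw k l (s : {perm 'I_k.+2}) (t : {perm 'I_l.+2})
  (p : bool * nat) : bool * nat :=
  if p.1 then (false, val (t (inord p.2))) else (true, val (s (inord p.2))).

Definition slot k (i : 'I_k.+1) : 'I_k.+2 := lift ord0 i.

Record is_cyclic_operad (R : nzRingType) (O : opData R) : Prop := {
  cyc_act_lin : forall k (s : {perm 'I_k.+2}) (a : R) (x y : op O k),
    opact O s (a *: x + y) = a *: opact O s x + opact O s y;
  cyc_comp_linl : forall k l (i : 'I_k.+1) (a : R) (x x' : op O k) (y : op O l),
    opcomp O i (a *: x + x') y = a *: opcomp O i x y + opcomp O i x' y;
  cyc_comp_linr : forall k l (i : 'I_k.+1) (a : R) (x : op O k) (y y' : op O l),
    opcomp O i x (a *: y + y') = a *: opcomp O i x y + opcomp O i x y';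
  cyc_act1 : forall k (x : op O k), opact O (1%g : {perm 'I_k.+2}) x = x;
  cyc_actM : forall k (s t : {perm 'I_k.+2}) (x : op O k),
    opact O s (opact O t x) = opact O (t * s)%g x;
  cyc_unitl : forall k (x : op O k), opcomp O (ord0 : 'I_1) (op1 O) x = x;
  cyc_unitr : forall k (i : 'I_k.+1) (x : op O k),
    castO (addn0 k) (opcomp O i x (op1 O)) = x;
  cyc_unit_inv : forall s : {perm 'I_2}, opact O s (op1 O) = op1 O;
  cyc_assoc_seq : forall k l p (i : 'I_k.+1) (j : 'I_(k + l).+1) (j' : 'I_l.+1)
      (x : op O k) (y : op O l) (z : op O p),
    (i <= j)%N -> val j' = (j - i)%N ->
    opcomp O j (opcomp O i x y) z
    = castO (addnA k l p) (opcomp O i x (opcomp O j' y z));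
  cyc_assoc_par : forall k l p (i : 'I_k.+1) (j : 'I_(k + l).+1) (j2 : 'I_k.+1)
      (i2 : 'I_(k + p).+1) (x : op O k) (y : op O l) (z : op O p),
    (j < i)%N -> val j2 = val j -> val i2 = (i + p)%N ->
    opcomp O j (opcomp O i x y) z
    = castO (addnAC k p l) (opcomp O i2 (opcomp O j2 x z) y);
  (* cyclic equivariance: composition is natural w.r.t. relabelling of
     slots (this contains the Sigma-equivariance of an operad and the
     cyclic axioms t(x o_i y) = t x o_{i-1} y, t(x o_1 y) = t y o_n t x) *)
  cyc_equiv : forall k l (i i' : 'I_k.+1) (s : {perm 'I_k.+2})
      (t : {perm 'I_l.+2}) (pi : {perm 'I_(k + l).+2})
      (x : op O k) (y : op O l),
    t ord0 = ord0 -> s (slot i) = slot i' ->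
    (forall r : 'I_(k + l).+2, orig l i' (pi r) = relab s t (orig l i r)) ->
    opcomp O i' (opact O s x) (opact O t y) = opact O pi (opcomp O i x y);
  cyc_equiv_swap : forall k l (i : 'I_k.+1) (i' : 'I_l.+1)
      (s : {perm 'I_k.+2}) (t : {perm 'I_l.+2}) (pi : {perm 'I_(k + l).+2})
      (x : op O k) (y : op O l),
    s (slot i) = ord0 -> t ord0 = slot i' ->
    (forall r : 'I_(k + l).+2, orig k i' (pi r) = relabsw s t (orig l i r)) ->
    castO (addnC l k) (opcomp O i' (opact O t y) (opact O s x))
    = opact O pi (opcomp O i x y)
}.

(* The symplectic space V_n = R^{2n}: coordinates lshift n i are p_i,       *)
(* rshift n i are q_i.                                                      *)

Definition Vn (R : nzRingType) (n : nat) := 'rV[R]_(n + n).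

Definition omega (R : nzRingType) (n : nat) (x y : Vn R n) : R :=
  \sum_(i < n) (x ord0 (lshift n i) * y ord0 (rshift n i)
                - x ord0 (rshift n i) * y ord0 (lshift n i)).

(* Generators: a symplecto-spider with k+2 legs, given by a representative  *)
(* (o)_L of the underlying spider (L : legs -> labels {0..k+1}, o in O[k+1])*)
(* and the vectors sv j on the legs j.                                      *)

Record sspider (R : nzRingType) (n : nat) (O : opData R) := SSp {
  sk : nat;
  sL : {perm 'I_sk.+2};
  so : op O sk;
  sv : {ffun 'I_sk.+2 -> Vn R n}
}.

Arguments SSp {R n O} sk sL so sv.

Definition fcomb (R : nzRingType) (n : nat) (O : opData R) :=
  seq (R * sspider n O).

Definition updv (R : nzRingType) (n k : nat) (v : {ffun 'I_k.+2 -> Vn R n})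
  (j : 'I_k.+2) (x : Vn R n) : {ffun 'I_k.+2 -> Vn R n} :=
  [ffun i => if i == j then x else v i].

(* Maps out of generators that respect all defining relations of            *)
(* aO_n = (+)_m (S[m] (x) V^{(x)m})_{Sigma_m}, S[m] = ((+)_L O[m-1])_{Sigma_m}:*)
(* linearity in o, multilinearity in the leg vectors, the label action      *)
(* (o)_L ~ (s.o)_{s.L}, and the diagonal action of Sigma_m on the legs.     *)
Definition admissible (R : nzRingType) (n : nat) (O : opData R)
  (W : lmodType R) (Phi : sspider n O -> W) : Prop :=
  [/\ (forall k (L : {perm 'I_k.+2}) (v : {ffun 'I_k.+2 -> Vn R n}) (a : R)
              (o o' : op O k),
         Phi (SSp k L (a *: o + o') v)
         = a *: Phi (SSp k L o v) + Phi (SSp k L o' v)),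
      (forall k (L : {perm 'I_k.+2}) (o : op O k)
              (v : {ffun 'I_k.+2 -> Vn R n}) (j : 'I_k.+2) (a : R)
              (x y : Vn R n),
         Phi (SSp k L o (updv v j (a *: x + y)))
         = a *: Phi (SSp k L o (updv v j x)) + Phi (SSp k L o (updv v j y))),
      (forall k (L s : {perm 'I_k.+2}) (o : op O k)
              (v : {ffun 'I_k.+2 -> Vn R n}),
         Phi (SSp k (L * s)%g (opact O s o) v) = Phi (SSp k L o v)) &
      (forall k (L t : {perm 'I_k.+2}) (o : op O k)
              (v : {ffun 'I_k.+2 -> Vn R n}),
         Phi (SSp k (t^-1 * L)%g o [ffun j => v ((t^-1)%g j)])
         = Phi (SSp k L o v))].

Definition evc (R : nzRingType) (n : nat) (O : opData R) (W : lmodType R)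
  (Phi : sspider n O -> W) (x : fcomb n O) : W :=
  \sum_(p <- x) p.1 *: Phi p.2.

(* x and y represent the same element of aO_n *)
Definition aequiv (R : nzRingType) (n : nat) (O : opData R)
  (x y : fcomb n O) : Prop :=
  forall (W : lmodType R) (Phi : sspider n O -> W),
    admissible Phi -> evc Phi x = evc Phi y.

(* (S,lam) o (mu,T): choose representatives with L1(lam) = 0, L2(mu) = 1    *)
(* (via the label action by transpositions), compose o2 o_1 o1 (this is     *)
(* gamma(o2; o1, 1, ..., 1)), and place on each slot of the result the      *)
(* vector of the leg attached to it.  The result is written with the        *)
(* identity labeling, i.e. legs ordered by the slots; this differs from the *)
(* paper's leg ordering only by a leg permutation (a defining relation).    *)

Definition mate (R : nzRingType) (n : nat) (O : opData R)
  (S T : sspider n O) (lam : 'I_(sk S).+2) (mu : 'I_(sk T).+2)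
  : sspider n O :=
  let k1 := sk S in
  let k2 := sk T in
  let s1 := tperm (sL S lam) ord0 in
  let L1 := (sL S * s1)%g in
  let o1 := opact O s1 (so S) in
  let s2 := tperm (sL T mu) (inord 1) in
  let L2 := (sL T * s2)%g in
  let o2 := opact O s2 (so T) in
  SSp (k2 + k1) 1%g (opcomp O (ord0 : 'I_k2.+1) o2 o1)
    [ffun j : 'I_(k2 + k1).+2 =>
       if val j == 0 then sv T ((L2^-1)%g ord0)
       else if (val j <= k1.+1)%N then sv S ((L1^-1)%g (inord j))
       else sv T ((L2^-1)%g (inord (j - k1)%N))].

Definition brg (R : nzRingType) (n : nat) (O : opData R)
  (S T : sspider n O) : fcomb n O :=
  flatten [seq [seq (omega (sv S lam) (sv T mu), mate lam mu)
               | mu <- enum 'I_(sk T).+2] | lam <- enum 'I_(sk S).+2].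

Definition abr (R : nzRingType) (n : nat) (O : opData R)
  (x y : fcomb n O) : fcomb n O :=
  flatten [seq [seq (p.1 * q.1 * r.1, r.2) | r <- brg p.2 q.2]
          | p <- x, q <- y].

Definition S0g (R : nzRingType) (n : nat) (O : opData R) (v w : Vn R n)
  : sspider n O :=
  SSp 0 1%g (op1 O) [ffun j : 'I_2 => if j == ord0 then v else w].

Definition S0comb (R : nzRingType) (n : nat) (O : opData R)
  (c : seq (R * Vn R n * Vn R n)) : fcomb n O :=
  [seq (p.1.1, S0g O p.1.2 p.2) | p <- c].

Definition scomb (R : nzRingType) (n : nat) (a : R)
  (c : seq (R * Vn R n * Vn R n)) : seq (R * Vn R n * Vn R n) :=
  [seq (a * p.1.1, p.1.2, p.2) | p <- c].

Definition Jmx (R : nzRingType) (n : nat) : 'M[R]_(n + n) :=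
  block_mx 0 1%:M (- 1%:M) 0.

Definition in_sp (R : nzRingType) (n : nat) (X : 'M[R]_(n + n)) : bool :=
  X^T *m Jmx R n + Jmx R n *m X == 0.

Definition lie (R : nzRingType) (n : nat) (X Y : 'M[R]_(n + n)) :
  'M[R]_(n + n) := X *m Y - Y *m X.

From HB Require Import structures.
From mathcomp Require Import all_boot all_order fingroup perm all_algebra.
From mathcomp Require Import reals ring.
Import Order.TTheory GRing.Theory Num.Theory.
Local Open Scope ring_scope.
Set Implicit Arguments.
Unset Strict Implicit.
Unset Printing Implicit Defensive.

(* Since 1_O is Sigma_2-invariant, [S_0 (x) v (x) w] is bilinear and
   symmetric in (v, w), so aO_n^0 is a quotient of Sym^2 V_n, and
   v.w |-> (v^T w + w^T v) J identifies Sym^2 V_n with sp(2n).  The entries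
   of the symmetric matrix v^T w + w^T v, multiplied by 1_O + 1_O != 0, are
   admissible maps, so nothing more is identified in aO_n^0.  Mating two
   copies of S_0 gives S_0 again, carrying the two unmated legs; hence
   [v.w, v'.w'] = sum omega(x, x') y.y' over the choices of mated legs x, x'
   with partners y, y', which is the commutator formula in sp(2n). *)

Section Symplectic.

Variables (R : comNzRingType) (n : nat).
Local Notation V := (Vn R n).
Local Notation J := (Jmx R n).

Definition symprod (v w : V) : 'M[R]_(n + n) := v^T *m w + w^T *m v.

Lemma symprodC (v w : V) : symprod v w = symprod w v.
Proof. by rewrite /symprod addrC. Qed.

Lemma symprodDl (a : R) (x y w : V) :
  symprod (a *: x + y) w = a *: symprod x w + symprod y w.
Proof.
rewrite /symprod linearD linearZ /= mulmxDl mulmxDr -scalemxAl -scalemxAr.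
by rewrite scalerDr addrACA.
Qed.

Lemma symprodDr (a : R) (x y w : V) :
  symprod w (a *: x + y) = a *: symprod w x + symprod w y.
Proof. by rewrite !(symprodC w) symprodDl. Qed.

Lemma tr_symprod (v w : V) : (symprod v w)^T = symprod v w.
Proof. by rewrite /symprod linearD /= !trmx_mul !trmxK addrC. Qed.

Lemma omega_antisym (b c : V) : omega b c = - omega c b.
Proof. by rewrite /omega -sumrN; apply: eq_bigr => i _; ring. Qed.

Lemma mul_Jmx_omega (b c : V) : b *m J *m c^T = (omega b c)%:M.
Proof.
rewrite /Jmx -[b]hsubmxK -[c]hsubmxK mul_row_block !mulmx0 !mulmx1 add0r addr0.
rewrite mulmxN mulmx1 tr_row_mx mul_row_col.
apply/matrixP => i j; rewrite !ord1 !mxE eqxx mulr1n /omega.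
rewrite -big_split /=; apply: eq_bigr => k _.
by rewrite !row_mxEl !row_mxEr !mxE; ring.
Qed.

Lemma mul_outer_Jmx (a b c d : V) :
  a^T *m b *m J *m (c^T *m d) = omega b c *: (a^T *m d).
Proof.
by rewrite !mulmxA -(mulmxA a^T) -(mulmxA a^T) mul_Jmx_omega mul_mx_scalar scalemxAl.
Qed.

Lemma Jmx2 : J *m J = - 1%:M.
Proof.
rewrite /Jmx mulmx_block !mulmx0 !mul0mx !addr0 !add0r mulmxN !mulmx1.
by rewrite (scalar_mx_block n n) opp_block_mx !oppr0.
Qed.

Lemma tr_Jmx : J^T = - J.
Proof.
by rewrite /Jmx tr_block_mx !trmx0 trmx1 linearN /= trmx1 opp_block_mx !oppr0 opprK.
Qed.

Lemma lie_sum I1 I2 (r1 : seq I1) (r2 : seq I2) (a : I1 -> R) (b : I2 -> R)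
  (X : I1 -> 'M[R]_(n + n)) (Y : I2 -> 'M[R]_(n + n)) :
  lie (\sum_(i <- r1) a i *: X i) (\sum_(j <- r2) b j *: Y j)
  = \sum_(i <- r1) \sum_(j <- r2) (a i * b j) *: lie (X i) (Y j).
Proof.
rewrite /lie mulmx_suml [_ *m \sum_(i <- r1) _]mulmx_sumr -sumrB.
apply: eq_bigr => i _; rewrite mulmx_sumr mulmx_suml -sumrB.
apply: eq_bigr => j _.
by rewrite -!scalemxAl -!scalemxAr !scalerA [b j * _]mulrC -scalerBr.
Qed.

Definition spgen v w : 'M[R]_(n + n) := symprod v w *m J.

Lemma lie_spgen (v1 w1 v2 w2 : V) :
  lie (spgen v1 w1) (spgen v2 w2) =
  omega v1 v2 *: spgen w2 w1 + omega v1 w2 *: spgen v2 w1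
  + omega w1 v2 *: spgen w2 v1 + omega w1 w2 *: spgen v2 v1.
Proof.
rewrite /lie /spgen !mulmxA -mulmxBl !scalemxAl -!mulmxDl; congr (_ *m _).
rewrite /symprod !mulmxDl !mulmxDr !mul_outer_Jmx.
rewrite (omega_antisym w2 v1) (omega_antisym w2 w1).
rewrite (omega_antisym v2 v1) (omega_antisym v2 w1).
by apply/matrixP => i j; rewrite !mxE; ring.
Qed.

Definition symmx (c : seq (R * V * V)) : 'M[R]_(n + n) :=
  \sum_(p <- c) p.1.1 *: symprod p.1.2 p.2.

Definition spmx (c : seq (R * V * V)) : 'M[R]_(n + n) := symmx c *m J.

Lemma spmxE (c : seq (R * V * V)) :
  spmx c = \sum_(p <- c) p.1.1 *: spgen p.1.2 p.2.
Proof.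
by rewrite /spmx /symmx mulmx_suml; apply: eq_bigr => p _; rewrite -scalemxAl.
Qed.

Lemma symmxE (c : seq (R * V * V)) : symmx c = - (spmx c *m J).
Proof. by rewrite /spmx -mulmxA Jmx2 mulmxN mulmx1 opprK. Qed.

Lemma tr_symmx (c : seq (R * V * V)) : (symmx c)^T = symmx c.
Proof.
rewrite /symmx; elim: c => [|p c IH]; first by rewrite !big_nil trmx0.
by rewrite !big_cons linearD linearZ /= IH tr_symprod.
Qed.

Lemma spmx_sp (c : seq (R * V * V)) : in_sp (spmx c).
Proof. by rewrite /in_sp /spmx trmx_mul tr_symmx tr_Jmx !mulNmx mulmxA addNr. Qed.

Lemma spmx_cat (c c' : seq (R * V * V)) : spmx (c ++ c') = spmx c + spmx c'.
Proof. by rewrite /spmx /symmx big_cat mulmxDl. Qed.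

Lemma spmx_scale (a : R) (c : seq (R * V * V)) : spmx (scomb a c) = a *: spmx c.
Proof.
rewrite /spmx /symmx /scomb big_map scalemxAl scaler_sumr; congr (_ *m _).
by apply: eq_bigr => p _ /=; rewrite scalerA.
Qed.

Lemma sp_mulJmx_sym (X : 'M[R]_(n + n)) :
  in_sp X -> (- (X *m J))^T = - (X *m J).
Proof.
move/eqP => spX.
have XTJ : X^T *m J = - (J *m X) by apply/eqP; rewrite -subr_eq0 opprK spX.
have JXT : J *m X^T = - (X *m J).
  have := congr1 (fun M => J *m M *m J) XTJ => /=.
  rewrite !mulmxA -[_ *m J *m J]mulmxA Jmx2 mulmxN mulmx1 mulmxN !mulNmx.
  by rewrite mulmxA Jmx2 !mulNmx mul1mx opprK => <-; rewrite opprK.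
by rewrite linearN /= trmx_mul tr_Jmx mulNmx opprK JXT.
Qed.

End Symplectic.

Lemma symmx_onto (R : numFieldType) (n : nat) (S : 'M[R]_(n + n)) :
  S^T = S -> exists c, symmx c = S.
Proof.
move=> symS.
exists [seq (S i j / 2, delta_mx 0 i, delta_mx 0 j) : R * Vn R n * Vn R n
       | i <- index_enum 'I_(n + n), j <- index_enum 'I_(n + n)].
have halfE i j : (2^-1 *: S) i j = S i j / 2 by rewrite mxE mulrC.
have sum_delta : \sum_i \sum_j (S i j / 2) *: delta_mx i j = 2^-1 *: S.
  rewrite [RHS]matrix_sum_delta; apply: eq_bigr => i _; apply: eq_bigr => j _.
  by rewrite halfE.
have sum_delta_tr : \sum_i \sum_j (S i j / 2) *: delta_mx j i = 2^-1 *: S.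
  rewrite exchange_big /= [RHS]matrix_sum_delta; apply: eq_bigr => i _.
  by apply: eq_bigr => j _; rewrite halfE -{1}symS mxE.
rewrite /symmx big_allpairs_dep /= -[S in RHS]scale1r [1 in RHS]splitr div1r.
rewrite scalerDl -{1}sum_delta -sum_delta_tr -big_split /=.
apply: eq_bigr => i _; rewrite -big_split /=; apply: eq_bigr => j _.
by rewrite /symprod !trmx_delta !mul_delta_mx scalerDr.
Qed.

Lemma spmx_onto (R : numFieldType) (n : nat) (X : 'M[R]_(n + n)) :
  in_sp X -> exists c, spmx c = X.
Proof.
move=> spX; have [c symmx_c] := symmx_onto (sp_mulJmx_sym spX).
by exists c; rewrite /spmx symmx_c mulNmx -mulmxA Jmx2 mulmxN mulmx1 opprK.
Qed.

Lemma linear_row_expand (R : nzRingType) (m : nat) (W : lmodType R)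
  (f : 'rV[R]_m -> W) :
  (forall a x y, f (a *: x + y) = a *: f x + f y) ->
  forall u, f u = \sum_i u 0 i *: f 'e_i.
Proof.
move=> f_lin u.
have f0 : f 0 = 0.
  apply: (addrI (f 0)); rewrite addr0.
  by rewrite -{1}(scale1r (f 0)) -f_lin scaler0 addr0.
rewrite {1}(row_sum_delta u); apply: (big_ind2 (fun x y => f x = y)) => //.
- by move=> x1 x2 y1 y2 <- <-; rewrite -[x1]scale1r f_lin !scale1r.
- by move=> i _; rewrite -[_ *: 'e_i]addr0 f_lin f0 addr0.
Qed.

Lemma ord2_cases (i : 'I_2) : i = ord0 \/ i = ord_max.
Proof. by case: i => [[|[|m]] Hm]; [left | right | by []]; apply: val_inj. Qed.

Definition swap2 : {perm 'I_2} := tperm ord0 ord_max.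

Lemma perm2_cases (s : {perm 'I_2}) : s = 1%g \/ s = swap2.
Proof.
have s_max : s ord_max != s ord0 by rewrite (inj_eq perm_inj).
case: (ord2_cases (s ord0)) => s0; [left | right]; apply/permP => i;
  case: (ord2_cases i) => ->; rewrite ?perm1 ?tpermL ?tpermR //;
  by move: s_max; rewrite s0; case: (ord2_cases (s ord_max)) => ->.
Qed.

Lemma big_enum_ord2 (W : nmodType) (F : 'I_2 -> W) :
  \sum_(i <- enum 'I_2) F i = F ord0 + F ord_max.
Proof.
rewrite enum_ordSl /= enum_ordSl enum_ord0 /= !big_cons big_nil addr0.
by congr (_ + F _); apply: val_inj.
Qed.

Section UnitSpider.

Variables (R : comNzRingType) (n : nat) (O : opData R).
Hypothesis HO : is_cyclic_operad O.
Local Notation V := (Vn R n).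

Section Pairing.

Variables (W : lmodType R) (Phi : sspider n O -> W).
Hypothesis Phi_adm : admissible Phi.

Definition S0form (v w : V) : W := Phi (S0g O v w).

Lemma S0form_linearl (w : V) (a : R) (x y : V) :
  S0form (a *: x + y) w = a *: S0form x w + S0form y w.
Proof.
have [_ Phi_lin _ _] := Phi_adm.
have updv0 z : updv [ffun j : 'I_2 => if j == ord0 then 0 else w] ord0 z
               = [ffun j : 'I_2 => if j == ord0 then z else w].
  by apply/ffunP => j; rewrite !ffunE; case: (ord2_cases j) => ->.
by rewrite /S0form /S0g -(updv0 (a *: x + y)) -(updv0 x) -(updv0 y) Phi_lin.
Qed.

Lemma S0form_linearr (v : V) (a : R) (x y : V) :
  S0form v (a *: x + y) = a *: S0form v x + S0form v y.
Proof.
have [_ Phi_lin _ _] := Phi_adm.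
have updv1 z : updv [ffun j : 'I_2 => if j == ord0 then v else 0] ord_max z
               = [ffun j : 'I_2 => if j == ord0 then v else z].
  by apply/ffunP => j; rewrite !ffunE; case: (ord2_cases j) => ->.
by rewrite /S0form /S0g -(updv1 (a *: x + y)) -(updv1 x) -(updv1 y) Phi_lin.
Qed.

Lemma S0formC (v w : V) : S0form v w = S0form w v.
Proof.
have [_ _ Phi_act Phi_legs] := Phi_adm.
rewrite /S0form /S0g -(Phi_legs 0 1%g swap2) /swap2 tpermV mulg1.
rewrite -(Phi_act 0 1%g (tperm ord0 ord_max)) mul1g (cyc_unit_inv HO).
congr (Phi (SSp 0 _ _ _)); apply/ffunP => j; rewrite !ffunE.
by case: (ord2_cases j) => ->; rewrite ?tpermL ?tpermR.
Qed.

Lemma S0form_expand (v w : V) :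
  S0form v w + S0form w v
  = \sum_a \sum_b symprod v w a b *: S0form 'e_a 'e_b.
Proof.
have expand x y : S0form x y = \sum_a \sum_b (x 0 a * y 0 b) *: S0form 'e_a 'e_b.
  rewrite (linear_row_expand (f := S0form^~ y) (S0form_linearl y) x).
  apply: eq_bigr => a _.
  rewrite (linear_row_expand (S0form_linearr 'e_a) y) scaler_sumr.
  by apply: eq_bigr => b _; rewrite scalerA.
rewrite (expand v w) (expand w v) -big_split /=; apply: eq_bigr => a _.
rewrite -big_split /=; apply: eq_bigr => b _.
by rewrite -scalerDl /symprod !mxE !big_ord1 !mxE.
Qed.

Lemma evc_S0comb (c : seq (R * V * V)) :
  2%:R *: evc Phi (S0comb O c) = \sum_a \sum_b symmx c a b *: S0form 'e_a 'e_b.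
Proof.
rewrite /evc /S0comb big_map scaler_sumr.
transitivity (\sum_(p <- c) p.1.1 *:
                \sum_a \sum_b symprod p.1.2 p.2 a b *: S0form 'e_a 'e_b).
  apply: eq_bigr => p _; rewrite -S0form_expand [S0form p.2 _]S0formC.
  by rewrite scalerA mulrC -scalerA scaler_nat mulr2n.
under eq_bigr do rewrite scaler_sumr; rewrite exchange_big; apply: eq_bigr => a _.
under eq_bigr do rewrite scaler_sumr; rewrite exchange_big; apply: eq_bigr => b _.
rewrite /symmx summxE scaler_suml; apply: eq_bigr => p _.
by rewrite scalerA [(_ *: symprod _ _) a b]mxE.
Qed.

End Pairing.

(* The factor o + swap.o (= 1_O + 1_O on S_0) makes this invariant under the
   label action. *)
Definition unit_coord (a b : 'I_(n + n)) (S : sspider n O) : op O 0 :=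
  match S with SSp k L o v =>
    (match k return op O k -> {ffun 'I_k.+2 -> V} -> op O 0 with
     | 0 => fun o v => symprod (v ord0) (v ord_max) a b *: (o + opact O swap2 o)
     | _.+1 => fun _ _ => 0 end) o v end.

Lemma unit_coord_adm a b : admissible (unit_coord a b).
Proof.
split.
- move=> [|k] L v c o o' /=; last by rewrite scaler0 addr0.
  by rewrite (cyc_act_lin HO) addrACA -scalerDr [LHS]scalerDr !scalerA mulrC.
- move=> [|k] L o v j c x y /=; last by rewrite scaler0 addr0.
  case: (ord2_cases j) => ->; rewrite !ffunE /=.
  + by rewrite symprodDl !mxE scalerDl scalerA.
  + by rewrite symprodDr !mxE scalerDl scalerA.
- move=> [|k] L s o v //=.
  case: (perm2_cases s) => ->; first by rewrite (cyc_act1 HO).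
  by rewrite (cyc_actM HO) /swap2 tperm2 (cyc_act1 HO) addrC.
- move=> [|k] L t o v //=.
  rewrite !ffunE; case: (perm2_cases t) => ->; first by rewrite invg1 !perm1.
  by rewrite /swap2 tpermV tpermL tpermR symprodC.
Qed.

Lemma evc_unit_coord (a b : 'I_(n + n)) (c : seq (R * V * V)) :
  evc (unit_coord a b) (S0comb O c) = symmx c a b *: (op1 O + op1 O).
Proof.
rewrite /evc /S0comb big_map /symmx summxE scaler_suml.
apply: eq_bigr => p _; rewrite /= (cyc_unit_inv HO) !ffunE /=.
by rewrite scalerA [(_ *: symprod _ _) a b]mxE.
Qed.

End UnitSpider.

Lemma aequiv_S0combP (R : numFieldType) (n : nat) (O : opData R) :
  is_cyclic_operad O -> op1 O != 0 ->
  forall c c', aequiv (S0comb O c) (S0comb O c') <-> @spmx R n c = spmx c'.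
Proof.
move=> HO op1_neq0 c c'; have two_neq0 : (2%:R : R) != 0 by rewrite pnatr_eq0.
split=> [equiv_cc' | spmx_cc' W Phi Phi_adm].
- suff eq_symmx : symmx c = symmx c' by rewrite /spmx eq_symmx.
  have op1D_neq0 : op1 O + op1 O != 0.
    by rewrite -mulr2n -scaler_nat scaler_eq0 negb_or two_neq0.
  apply/matrixP => a b; apply/eqP; rewrite -subr_eq0.
  have := equiv_cc' _ _ (unit_coord_adm HO a b).
  rewrite !(evc_unit_coord HO) => /eqP; rewrite -subr_eq0 -scalerBl scaler_eq0.
  by rewrite (negbTE op1D_neq0) orbF.
- apply: (scalerI two_neq0).
  by rewrite !(evc_S0comb HO Phi_adm) !symmxE spmx_cc'.
Qed.

Section Bracket.

Variables (R : comNzRingType) (n : nat) (O : opData R).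
Hypothesis HO : is_cyclic_operad O.
Local Notation V := (Vn R n).

Lemma mate_S0g (v1 w1 v2 w2 : V) (lam mu : 'I_2) :
  @mate _ _ O (S0g O v1 w1) (S0g O v2 w2) lam mu
  = S0g O (if mu == ord0 then w2 else v2) (if lam == ord0 then w1 else v1).
Proof.
have inord1 : (inord 1 : 'I_2) = ord_max by apply: val_inj; rewrite /= inordK.
rewrite /mate /S0g /= !(cyc_unit_inv HO) (cyc_unitl HO).
congr (SSp _ _ _ _); apply/ffunP => j; rewrite !ffunE !mul1g !perm1 !tpermV.
case: (ord2_cases j) => -> /=; rewrite inord1.
- by case: (ord2_cases mu) => ->; rewrite ?tpermL ?tperm1 ?perm1.
- by case: (ord2_cases lam) => ->; rewrite ?tpermL ?tperm1 ?perm1.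
Qed.

Lemma big_abr_S0comb (U : nmodType) (F : R -> sspider n O -> U)
  (c c' : seq (R * V * V)) :
  \sum_(r <- abr (S0comb O c) (S0comb O c')) F r.1 r.2 =
  \sum_(p <- c) \sum_(q <- c') \sum_(lam <- enum 'I_2) \sum_(mu <- enum 'I_2)
    F (p.1.1 * q.1.1 * omega (sv (S0g O p.1.2 p.2) lam) (sv (S0g O q.1.2 q.2) mu))
      (@mate _ _ O (S0g O p.1.2 p.2) (S0g O q.1.2 q.2) lam mu).
Proof.
rewrite /abr big_flatten /= big_allpairs_dep /S0comb big_map.
apply: eq_bigr => p _; rewrite big_map; apply: eq_bigr => q _.
rewrite big_map /brg big_flatten /= big_map; apply: eq_bigr => lam _.
by rewrite big_map.
Qed.

(* Reading off the two legs loses nothing: every spider in this bracket is a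
   unit spider (mate_S0g). *)
Definition S0bracket (c c' : seq (R * V * V)) : seq (R * V * V) :=
  [seq (r.1, sv r.2 ord0, sv r.2 ord_max) | r <- abr (S0comb O c) (S0comb O c')].

Lemma sv_S0g_eq (S : sspider n O) (v w : V) :
  S = S0g O v w -> sv S ord0 = v /\ sv S ord_max = w.
Proof. by move=> ->; rewrite /= !ffunE. Qed.

Lemma abr_S0comb_aequiv (c c' : seq (R * V * V)) :
  aequiv (abr (S0comb O c) (S0comb O c')) (S0comb O (S0bracket c c')).
Proof.
move=> W Phi _.
rewrite /evc [in RHS]/S0comb /S0bracket -map_comp big_map.
rewrite (big_abr_S0comb (fun a S => a *: Phi S)).
rewrite (big_abr_S0comb (fun a S => a *: Phi (S0g O (sv S ord0) (sv S ord_max)))).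
apply: eq_bigr => p _; apply: eq_bigr => q _.
apply: eq_bigr => lam _; apply: eq_bigr => mu _ /=.
have [-> ->] := sv_S0g_eq (mate_S0g p.1.2 p.2 q.1.2 q.2 lam mu).
by rewrite mate_S0g.
Qed.

Lemma spmx_S0bracket (c c' : seq (R * V * V)) :
  spmx (S0bracket c c') = lie (spmx c) (spmx c').
Proof.
rewrite spmxE /S0bracket big_map.
rewrite (big_abr_S0comb (fun a S => a *: spgen (sv S ord0) (sv S ord_max))).
rewrite !spmxE lie_sum; apply: eq_bigr => p _; apply: eq_bigr => q _.
have sv_mate lam mu := sv_S0g_eq (mate_S0g p.1.2 p.2 q.1.2 q.2 lam mu).
rewrite lie_spgen !big_enum_ord2 /= !(proj1 (sv_mate _ _)) !(proj2 (sv_mate _ _)).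
rewrite /S0g /= !ffunE /=.
by rewrite !scalerDr !scalerA !addrA.
Qed.

End Bracket.

Theorem proposition2p17 (R : realType) (n : nat) (O : opData R) :
  is_cyclic_operad O -> op1 O != 0 -> (0 < n)%N ->
  exists psi : seq (R * Vn R n * Vn R n) -> 'M[R]_(n + n),
    [/\ (forall c, in_sp (psi c)),
        (forall c c', aequiv (S0comb O c) (S0comb O c') <-> psi c = psi c'),
        (forall X, in_sp X -> exists c, psi c = X),
        (forall c c', psi (c ++ c') = psi c + psi c')
          /\ (forall a c, psi (scomb a c) = a *: psi c) &
        (forall c c', exists c'',
            aequiv (abr (S0comb O c) (S0comb O c')) (S0comb O c'')
            /\ psi c'' = lie (psi c) (psi c'))].
Proof.
move=> HO op1_neq0 _; exists (@spmx R n); split.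
- exact: spmx_sp.
- exact: aequiv_S0combP.
- exact: spmx_onto.
- by split; [exact: spmx_cat | exact: spmx_scale].
- move=> c c'; exists (S0bracket O c c').
  by split; [exact: abr_S0comb_aequiv | exact: spmx_S0bracket].
Qed.
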